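(* Let $N\ge1$ and let $\tilde\Phi:\mathbb{R}^N\to\mathbb{R}$ be a twice differentiable convex function with $\nabla\tilde\Phi(G)\in\Delta_N$ and $\nabla_i\tilde\Phi(G)>0$ for all $G$ and $i$. Suppose that for constants $C,\gamma>0$, $\tilde\Phi$ is $(\gamma,C)$-differentially-consistent, i.e. for all $G\in(-\infty,0]^N$ and all $i$, $\nabla^2_{ii}\tilde\Phi(G)\le C(\nabla_i\tilde\Phi(G))^\gamma$. Consider one round $t$ of GBPA$(\tilde\Phi)$ with loss vector $g_t\in[-1,0]^N$ and current estimate $\hat G_{t-1}\in(-\infty,0]^N$. Then \[\mathbb{E}_{i_t}\big[D_{\tilde\Phi}(\hat G_t,\hat G_{t-1})\,\big|\,\hat G_{t-1}\big]\le\frac{C}{2}\sum_{i=1}^N\big(\nabla_i\tilde\Phi(\hat G_{t-1})\big)^{\gamma-1}.\]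
   Context: $\Delta_N$ is the probability simplex in $\mathbb{R}^N$, $e_i$ the $i$-th standard basis vector. One round of GBPA$(\tilde\Phi)$ at time $t$: given $\hat G_{t-1}$, sample $i_t$ with probability $p_{t,i}=\nabla_i\tilde\Phi(\hat G_{t-1})$, observe $g_{t,i_t}$, set $\hat G_t=\hat G_{t-1}+\frac{g_{t,i_t}}{p_{t,i_t}}e_{i_t}$ (the algorithm starts from $\hat G_0=0$, so all $\hat G_t$ lie in $(-\infty,0]^N$). $D_{\tilde\Phi}(x,y)=\tilde\Phi(x)-\tilde\Phi(y)-\langle\nabla\tilde\Phi(y),x-y\rangle$ is the Bregman divergence; $\nabla_i$ and $\nabla^2_{ii}$ denote first and second partial derivatives in coordinate $i$. *)

From HB Require Import structures.
From mathcomp Require Import all_boot all_order all_algebra.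
From mathcomp Require Import all_classical all_reals all_analysis.
Set Implicit Arguments. Unset Strict Implicit. Unset Printing Implicit Defensive.
Import Order.TTheory GRing.Theory Num.Theory.
Import numFieldNormedType.Exports.
Local Open Scope ring_scope.

Section Defs.
Variables (R : realType) (N : nat).

Definition e_vec (i : 'I_N) : 'rV[R]_N := delta_mx 0 i.

Definition partial (i : 'I_N) (f : 'rV[R]_N -> R) (G : 'rV[R]_N) : R :=
  'D_(e_vec i) f G.

Definition grad (f : 'rV[R]_N -> R) (G : 'rV[R]_N) : 'rV[R]_N :=
  \row_i partial i f G.

Definition partial2 (i : 'I_N) (f : 'rV[R]_N -> R) (G : 'rV[R]_N) : R :=
  'D_(e_vec i) (partial i f) G.

Definition in_simplex (p : 'rV[R]_N) : Prop :=
  (forall i, 0 <= p 0 i) /\ \sum_i p 0 i = 1.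

Definition nonpos_vec (G : 'rV[R]_N) : Prop := forall i, G 0 i <= 0.

Definition convex_fun_rV (f : 'rV[R]_N -> R) : Prop :=
  forall (x y : 'rV[R]_N) (t : R), 0 <= t <= 1 ->
    f (t *: x + (1 - t) *: y) <= t * f x + (1 - t) * f y.

Definition bregman (f : 'rV[R]_N -> R) (x y : 'rV[R]_N) : R :=
  f x - f y - \sum_i grad f y 0 i * (x - y) 0 i.

Definition diff_consistent (gamma C : R) (f : 'rV[R]_N -> R) : Prop :=
  forall G, nonpos_vec G -> forall i, partial2 i f G <= C * (partial i f G) `^ gamma.

(* one GBPA update when coordinate i is sampled: G + (g_i / p_i) e_i *)
Definition gbpa_next (f : 'rV[R]_N -> R) (Gprev g : 'rV[R]_N) (i : 'I_N) : 'rV[R]_N :=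
  Gprev + (g 0 i / partial i f Gprev) *: e_vec i.

End Defs.

From HB Require Import structures.
From mathcomp Require Import all_boot all_order all_algebra.
From mathcomp Require Import all_classical all_reals all_analysis.
From mathcomp Require Import lra ring.
Import Order.TTheory GRing.Theory Num.Theory.
Import numFieldNormedType.Exports.
Set Implicit Arguments. Unset Strict Implicit. Unset Printing Implicit Defensive.
Local Open Scope ring_scope.

(* Along the coordinate line s |-> G + s e_i, the Bregman divergence
   D(G + h e_i, G) is the remainder of a first-order Taylor expansion, hence at
   most K h^2 / 2 for any bound K on the second partial derivative over the
   segment. For the GBPA step h = g_i / p_i <= 0 the segment stays in the
   nonpositive orthant, and convexity makes the i-th partial derivative
   nondecreasing along e_i, so differential consistency gives K = C p_i^gamma.
   Weighting by the sampling probability p_i leaves C/2 p_i^(gamma-1) g_i^2,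
   and g_i^2 <= 1. *)

Section RealLine.
Variable R : realType.
Implicit Types (f df d2f : R -> R) (a b K : R).

Lemma is_derive_continuous f df :
  (forall s : R, is_derive s (1 : R) f (df s)) -> continuous f.
Proof.
move=> fdf s; apply: differentiable_continuous; apply/derivable1_diffP.
by case: (fdf s).
Qed.

Lemma is_derive_ge0_le f df a b : a <= b ->
  (forall s : R, is_derive s (1 : R) f (df s)) -> (forall s, a <= s <= b -> 0 <= df s) ->
  f a <= f b.
Proof.
move=> ab fdf df0.
have [c cab fab] := MVT_segment ab (fun s _ => fdf s)
  (continuous_subspaceT (is_derive_continuous fdf)).
rewrite -subr_ge0 fab mulr_ge0 ?subr_ge0 //.
by apply: df0; rewrite in_itv /= in cab.
Qed.

Lemma taylor_remainder_le_left f df d2f a b K : a <= b ->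
  (forall s : R, is_derive s (1 : R) f (df s)) ->
  (forall s : R, is_derive s (1 : R) df (d2f s)) ->
  (forall s, a <= s <= b -> d2f s <= K) ->
  f a - f b - df b * (a - b) <= K * (a - b) ^+ 2 / 2.
Proof.
move=> ab fdf dfd2f d2fK.
pose u := K \*: id - df.
have udu t : is_derive t (1 : R) u (K - d2f t).
  by apply: is_derive_eq; rewrite -[K *: 1]/(K * 1) mulr1.
have df_lb s : a <= s <= b -> 0 <= df s - df b - K * (s - b).
  case/andP=> as_ sb.
  suff : K * s - df s <= K * b - df b by lra.
  have := is_derive_ge0_le sb udu.
  rewrite /u !fctE /= -[K *: s]/(K * s) -[K *: b]/(K * b); apply.
  move=> t /andP[st tb]; rewrite subr_ge0; apply: d2fK.
  by rewrite (le_trans as_ st).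
(* [psi t] is [f t - df b * t - K / 2 * (t - b) ^+ 2] up to a constant. *)
pose psi := f - (df b - K * b) \*: id - (K / 2) \*: id ^+ 2.
have psid t : is_derive t (1 : R) psi (df t - df b - K * (t - b)).
  apply: is_derive_eq.
  by rewrite /GRing.scale /= !mulr1 expr1; field.
have := is_derive_ge0_le ab psid df_lb.
rewrite /psi !fctE /= /GRing.scale /=.
nra.
Qed.

Lemma is_derive_line (V : normedModType R) (f : V -> R) (x v : V) (s : R) :
  derivable f (s *: v + x) v ->
  is_derive s (1 : R) (fun t : R => f (t *: v + x)) ('D_v f (s *: v + x)).
Proof.
have quotE : (fun h : R => h^-1 *: (((fun t : R => f (t *: v + x)) \o shift s) (h *: (1 : R))
                              - f (s *: v + x)))
           = (fun h : R => h^-1 *: ((f \o shift (s *: v + x)) (h *: v) - f (s *: v + x))).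
  apply/funext => h /=; congr (_ *: (f _ - _)).
  by rewrite -[h *: 1]/(h * 1) mulr1 scalerDl addrA.
by move=> fv; split; rewrite /derivable /derive quotE.
Qed.

Lemma derive_dirZ (V : normedModType R) (f : V -> R) (x v : V) (c : R) :
  differentiable f x -> 'D_(c *: v) f x = c * 'D_v f x.
Proof. by move=> df; rewrite !deriveE // linearZ. Qed.

Lemma powRD1 (x r : R) : 0 < x -> x `^ (r + 1) = x `^ r * x.
Proof.
move=> x_gt0; rewrite powRD ?powRr1 ?ltW //.
by rewrite (lt0r_neq0 x_gt0) implybT.
Qed.

End RealLine.

Section Convexity.
Variables (R : realType) (N : nat) (f : 'rV[R]_N -> R).
Hypothesis cvx_f : convex_fun_rV f.

Lemma convex_derive_le (x y : 'rV[R]_N) :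
  derivable f x (y - x) -> f x + 'D_(y - x) f x <= f y.
Proof.
move=> dx.
rewrite addrC -lerBrDr /derive.
rewrite (cvg_at_rightE (fun h : R => h^-1 *: ((f \o shift x) (h *: (y - x)) - f x))) //.
apply: limr_le.
  by apply/cvg_ex; eexists; exact: cvg_dnbhs_at_right dx.
near=> h.
have h0 : 0 < h by near: h; exact: nbhs_right_gt.
have h1 : h <= 1 by near: h; exact: nbhs_right_le.
have := @cvx_f y x h; rewrite ltW //= h1 => /(_ isT).
have -> : h *: y + (1 - h) *: x = (shift x) (h *: (y - x)).
  by rewrite /= scalerBr scalerBl scale1r addrA addrAC.
by move=> H; rewrite /= -[_ *: _]/(h^-1 * _) ler_pdivrMl //; lra.
Unshelve. all: by end_near.
Qed.

Lemma convex_derive_shift_le (x v : 'rV[R]_N) (s : R) :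
  differentiable f x -> differentiable f (s *: v + x) -> s <= 0 ->
  'D_v f (s *: v + x) <= 'D_v f x.
Proof.
move=> dfx dfsx s_le0.
have [->|s_neq0] := eqVneq s 0; first by rewrite scale0r add0r.
have s_lt0 : s < 0 by rewrite lt_neqAle s_neq0.
have := convex_derive_le (diff_derivable (v := s *: v + x - x) dfx).
have := convex_derive_le (diff_derivable (v := x - (s *: v + x)) dfsx).
have -> : s *: v + x - x = s *: v by rewrite addrK.
have -> : x - (s *: v + x) = (- s) *: v by rewrite opprD addrCA subrr addr0 scaleNr.
rewrite !derive_dirZ //; nra.
Qed.

End Convexity.

Section CoordinateLine.
Variables (R : realType) (N : nat).
Implicit Types (f : 'rV[R]_N -> R) (G : 'rV[R]_N) (i : 'I_N).

Lemma bregman_e_vec f G i (h : R) :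
  bregman f (G + h *: e_vec R i) G = f (h *: e_vec R i + G) - f G - partial i f G * h.
Proof.
rewrite /bregman (addrC G) addrK (bigD1 i) //= big1 ?addr0.
  by rewrite !mxE /= eqxx mulr1.
by move=> j ji; rewrite !mxE (negbTE ji) mulr0 mulr0.
Qed.

Lemma nonpos_vec_shift G i (s : R) :
  s <= 0 -> nonpos_vec G -> nonpos_vec (s *: e_vec R i + G).
Proof.
move=> s_le0 G_le0 j; rewrite !mxE.
by case: (j == i); rewrite ?mulr1 ?mulr0 ?add0r ?G_le0 // ler_wnDl ?G_le0.
Qed.

Lemma differentiable_partial f i G :
  differentiable (grad f) G -> differentiable (partial i f) G.
Proof.
have -> : partial i f = (fun M : 'rV[R]_N => M 0 i) \o grad f.
  by apply/funext => M /=; rewrite mxE.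
by move=> dgrad; apply: differentiable_comp => //; exact: differentiable_coord.
Qed.

End CoordinateLine.

Section GBPARound.
Variables (R : realType) (N : nat) (Phi : 'rV[R]_N -> R).
Hypothesis dPhi : forall G, differentiable Phi G.
Hypothesis dgrad : forall G, differentiable (grad Phi) G.
Hypothesis cvxPhi : convex_fun_rV Phi.
Implicit Types (G : 'rV[R]_N) (i : 'I_N).

Lemma bregman_e_vec_le i G (h K : R) : h <= 0 ->
  (forall s, h <= s <= 0 -> partial2 i Phi (s *: e_vec R i + G) <= K) ->
  bregman Phi (G + h *: e_vec R i) G <= K * h ^+ 2 / 2.
Proof.
move=> h_le0 d2K.
have Dphi s : is_derive s (1 : R) (fun t : R => Phi (t *: e_vec R i + G))
    (partial i Phi (s *: e_vec R i + G)).
  apply: is_derive_line; exact: diff_derivable.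
have Dpartial s : is_derive s (1 : R) (fun t : R => partial i Phi (t *: e_vec R i + G))
    (partial2 i Phi (s *: e_vec R i + G)).
  apply: is_derive_line; apply: diff_derivable; exact: differentiable_partial.
have := taylor_remainder_le_left h_le0 Dphi Dpartial d2K.
by rewrite bregman_e_vec scale0r add0r subr0.
Qed.

Lemma partial_shift_le i G (s : R) : s <= 0 ->
  partial i Phi (s *: e_vec R i + G) <= partial i Phi G.
Proof. exact: (convex_derive_shift_le cvxPhi (dPhi G) (dPhi _)). Qed.

Lemma partial2_shift_le (gamma C : R) i G (s : R) :
  0 <= C -> 0 <= gamma -> (forall G, 0 < partial i Phi G) ->
  diff_consistent gamma C Phi ->
  nonpos_vec G -> s <= 0 ->
  partial2 i Phi (s *: e_vec R i + G) <= C * partial i Phi G `^ gamma.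
Proof.
move=> C_ge0 gamma_ge0 partial_gt0 dcons G_le0 s_le0.
have dcons_s := dcons _ (nonpos_vec_shift i s_le0 G_le0) i.
apply: (le_trans dcons_s); apply: (ler_wpM2l C_ge0).
apply: ge0_ler_powR => //; last exact: partial_shift_le.
all: by rewrite nnegrE ltW.
Qed.

Lemma bregman_gbpa_next_le (gamma C : R) (g : 'rV[R]_N) i G :
  0 <= C -> 0 <= gamma -> (forall G, 0 < partial i Phi G) ->
  diff_consistent gamma C Phi -> -1 <= g 0 i <= 0 -> nonpos_vec G ->
  partial i Phi G * bregman Phi (gbpa_next Phi G g i) G
    <= C / 2 * partial i Phi G `^ (gamma - 1).
Proof.
move=> C_ge0 gamma_ge0 partial_gt0 dcons /andP[g_ge g_le0] G_le0.
set p := partial i Phi G; have p_gt0 : 0 < p := partial_gt0 G.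
set h := g 0 i / p.
have h_le0 : h <= 0 by rewrite /h mulr_le0_ge0 // invr_ge0 ltW.
have d2_le s : h <= s <= 0 -> partial2 i Phi (s *: e_vec R i + G) <= C * p `^ gamma.
  by case/andP=> _; apply: partial2_shift_le.
have powE : p `^ gamma = p `^ (gamma - 1) * p by rewrite -powRD1 // subrK.
have := bregman_e_vec_le h_le0 d2_le.
rewrite -/(gbpa_next Phi G g i) powE => breg_le.
set P := p `^ (gamma - 1); have P_ge0 : 0 <= P := powR_ge0 _ _.
apply: le_trans (ler_wpM2l (ltW p_gt0) breg_le) _.
have -> : p * (C * (P * p) * h ^+ 2 / 2) = C / 2 * P * g 0 i ^+ 2.
  by rewrite /h; field; exact: lt0r_neq0.
rewrite -[leRHS]mulr1 ler_wpM2l ?mulr_ge0 ?divr_ge0 //; nra.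
Qed.

End GBPARound.

Theorem theorem1 (R : realType) (N : nat) (Phi : 'rV[R]_N -> R) (C gamma : R)
    (g Gprev : 'rV[R]_N) :
  (0 < N)%N ->
  (forall G, differentiable Phi G) ->
  (forall G, differentiable (grad Phi) G) ->
  convex_fun_rV Phi ->
  (forall G, in_simplex (grad Phi G)) ->
  (forall G i, 0 < partial i Phi G) ->
  0 < C -> 0 < gamma ->
  diff_consistent gamma C Phi ->
  (forall i, -1 <= g 0 i <= 0) ->
  nonpos_vec Gprev ->
  \sum_i partial i Phi Gprev * bregman Phi (gbpa_next Phi Gprev g i) Gprev
    <= C / 2 * \sum_i (partial i Phi Gprev) `^ (gamma - 1).
Proof.
move=> _ dPhi dgrad cvxPhi _ p_gt0 C_gt0 gamma_gt0 dcons g_bnd G_le0.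
rewrite mulr_sumr; apply: ler_sum => i _.
exact: (bregman_gbpa_next_le dPhi dgrad cvxPhi (ltW C_gt0) (ltW gamma_gt0)
  (p_gt0^~ i) dcons (g_bnd i) G_le0).
Qed.
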